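(* Let $\mathbf{A}=(A_{i,j})_{p\times p}$ be a deterministic symmetric $\{0,1\}$-valued matrix with zero diagonal, $\delta=\frac{2}{p(p-1)}\sum_{i<j}A_{i,j}$ its edge density, and $N=p(p-1)/2$. Let $\mathbf{Y},\mathbf{Y}_*$ be independent and identically distributed symmetric random matrices with zero diagonal, each generated as $Y_{i,j}=A_{i,j}I(\varepsilon_{i,j}=0)+I(\varepsilon_{i,j}=1)$ for $i\neq j$, where $\varepsilon_{i,j}=\varepsilon_{j,i}$, $\mathbb{P}(\varepsilon_{i,j}=1)=\alpha$, $\mathbb{P}(\varepsilon_{i,j}=0)=1-\alpha-\beta$, $\mathbb{P}(\varepsilon_{i,j}=-1)=\beta$ for all $i<j$, and $\{\varepsilon_{i,j}\}_{i<j}$ are independent. Let $\hat u_1=\frac{2}{p(p-1)}\sum_{i<j}Y_{i,j}$ and $\hat u_2=\frac{1}{p(p-1)}\sum_{i<j}|Y_{i,j,*}-Y_{i,j}|$. Define \[ \hat\beta=\frac{\hat u_2-\alpha+\hat u_1\alpha}{\hat u_1-\alpha},\qquad \hat\delta=\frac{(\hat u_1-\alpha)^2}{\hat u_1-\hat u_2-2\hat u_1\alpha+\alpha^2} \] (for use when $\alpha$ is known) and \[ \hat\alpha=\frac{\hat u_1\beta-\hat u_2}{\hat u_1+\beta-1},\qquad \hat\delta=\frac{\hat u_1^2-\hat u_1+\hat u_2}{\hat u_1+\hat u_2-2\hat u_1\beta-(1-\beta)^2} \] (for use when $\beta$ is known). Consider $p\to\infty$ (with $\mathbf{A}$, $\delta$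 and possibly $\alpha,\beta$ depending on $p$), and suppose $N_1=p(p-1)\delta\to\infty$ and $N_2=p(p-1)(1-\delta)\to\infty$. Then (i) if $\alpha$ is known and $\delta(1-\alpha-\beta)^2\ge c$ for some positive constant $c$, the first pair satisfies $\hat\beta=\beta+O_p(N^{-1/2})$ and $\hat\delta=\delta+O_p(N^{-1/2})$; (ii) if $\beta$ is known and $(1-\delta)(1-\alpha-\beta)^2\ge c$ for some positive constant $c$, the second pair satisfies $\hat\alpha=\alpha+O_p(N^{-1/2})$ and $\hat\delta=\delta+O_p(N^{-1/2})$.
   Context: $\alpha$ and $\beta$ are the error rates: $\mathbb{P}(Y_{i,j}=1\mid A_{i,j}=0)=\alpha$, $\mathbb{P}(Y_{i,j}=0\mid A_{i,j}=1)=\beta$. *)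

From HB Require Import structures.
From mathcomp Require Import all_boot all_order all_algebra.
From mathcomp Require Import reals.
Unset Printing Implicit Defensive.
Import Order.TTheory GRing.Theory Num.Theory.
Local Open Scope ring_scope.

(* The noise variable eps_{i,j} in {1,0,-1} is encoded by e : 'I_3 with
   e = 0 <-> eps = 0,  e = 1 <-> eps = 1,  e = 2 <-> eps = -1. *)

Definition eps_pmf (R : realType) (al be : R) (e : 'I_3) : R :=
  if nat_of_ord e == 0%N then 1 - al - be
  else if nat_of_ord e == 1%N then al else be.

Definition Yval (R : realType) (a : bool) (e : 'I_3) : R :=
  if nat_of_ord e == 1%N then 1
  else if nat_of_ord e == 0%N then (a : nat)%:R else 0.

(* Sample space for a given p: the noise of Y (first component) and of the
   independent copy Y_* (second component); only entries (i,j) with i < j are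
   random, the others are fixed (to code 0) with probability one. *)
Definition Omega (p : nat) : finType :=
  ({ffun 'I_p * 'I_p -> 'I_3} * {ffun 'I_p * 'I_p -> 'I_3})%type.

Definition site_weight (R : realType) (p : nat) (al be : R)
    (k : 'I_p * 'I_p) (e : 'I_3) : R :=
  if (k.1 < k.2)%N then eps_pmf R al be e else (nat_of_ord e == 0%N)%:R.

Definition weight (R : realType) (p : nat) (al be : R) (w : Omega p) : R :=
  \prod_(k : 'I_p * 'I_p) (site_weight R p al be k (w.1 k) * site_weight R p al be k (w.2 k)).

Definition Prob (R : realType) (p : nat) (al be : R) (E : pred (Omega p)) : R :=
  \sum_(w : Omega p | E w) weight R p al be w.

Definition Nn (R : realType) (p : nat) : R := (p * p.-1)%N%:R / 2.

Definition delta (R : realType) (A : forall p : nat, 'I_p -> 'I_p -> bool) (p : nat) : R :=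
  2 / (p * p.-1)%N%:R * \sum_(k : 'I_p * 'I_p | (k.1 < k.2)%N) (A p k.1 k.2 : nat)%:R.

Definition u1hat (R : realType) (A : forall p : nat, 'I_p -> 'I_p -> bool) (p : nat)
    (w : Omega p) : R :=
  2 / (p * p.-1)%N%:R *
    \sum_(k : 'I_p * 'I_p | (k.1 < k.2)%N) Yval R (A p k.1 k.2) (w.1 k).

Definition u2hat (R : realType) (A : forall p : nat, 'I_p -> 'I_p -> bool) (p : nat)
    (w : Omega p) : R :=
  1 / (p * p.-1)%N%:R *
    \sum_(k : 'I_p * 'I_p | (k.1 < k.2)%N)
      `|Yval R (A p k.1 k.2) (w.2 k) - Yval R (A p k.1 k.2) (w.1 k)|.

(* estimators (division by 0 follows MathComp's convention x / 0 = 0) *)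
Definition beta_hat (R : realType) (al u1 u2 : R) : R :=
  (u2 - al + u1 * al) / (u1 - al).
Definition delta_hat_alpha (R : realType) (al u1 u2 : R) : R :=
  (u1 - al) ^+ 2 / (u1 - u2 - 2 * u1 * al + al ^+ 2).
Definition alpha_hat (R : realType) (be u1 u2 : R) : R :=
  (u1 * be - u2) / (u1 + be - 1).
Definition delta_hat_beta (R : realType) (be u1 u2 : R) : R :=
  (u1 ^+ 2 - u1 + u2) / (u1 + u2 - 2 * u1 * be - (1 - be) ^+ 2).

Definition tends_to_infty (R : realType) (f : nat -> R) : Prop :=
  forall M : R, exists P0 : nat, forall p : nat, (P0 <= p)%N -> M < f p.

Definition OpN (R : realType) (al be : nat -> R) (X : forall p : nat, Omega p -> R) : Prop :=
  forall eta : R, 0 < eta ->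
  exists M : R, 0 < M /\
  exists P0 : nat, forall p : nat, (P0 <= p)%N ->
    Prob R p (al p) (be p) (fun w : Omega p => M / Num.sqrt (Nn R p) < `|X p w|) <= eta.

(* û1 and û2 are averages over the N = p(p-1)/2 pairs i < j of independent
   site variables with values in [0, 1] (Y_ij, resp. |Y*_ij - Y_ij| / 2), so by
   Chebyshev's inequality they lie within O_p(N^-1/2) of their means
   u1 = α + δ(1-α-β) and u2 = δβ(1-β) + (1-δ)α(1-α).  Each estimator is a ratio
   n(û1, û2) / d(û1, û2) that returns the true parameter exactly at (u1, u2),
   where |d| = δ(1-α-β) or δ(1-α-β)^2 (resp. (1-δ)(1-α-β) or (1-δ)(1-α-β)^2)
   is at least c.  Near (u1, u2) the denominator therefore stays above c/2 and
   the numerator n - x d is linear in the perturbation, so the estimation error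
   is O(|û1 - u1| + |û2 - u2|) / c = O_p(N^-1/2). *)

From HB Require Import structures.
From mathcomp Require Import all_boot all_order all_algebra.
From mathcomp Require Import reals.
From mathcomp Require Import ring lra.

Set Implicit Arguments.
Unset Strict Implicit.
Import Order.TTheory GRing.Theory Num.Theory.
Local Open Scope ring_scope.

Lemma card_pairs_lt (p : nat) :
  (\sum_(k : 'I_p * 'I_p | (k.1 < k.2)%N) 1)%N = 'C(p, 2).
Proof.
rewrite -(pair_big_dep xpredT (fun i j : 'I_p => (i < j)%N) (fun _ _ => 1%N)) /=.
rewrite (exchange_big_dep xpredT) //= -bin2_sum big_mkord; apply: eq_bigr => j _.
by rewrite -(big_ord_widen _ (fun=> 1%N) (ltnW (ltn_ord j))) sum1_card card_ord.
Qed.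

Lemma Nn_bin2 (R : realType) (p : nat) : Nn R p = 'C(p, 2)%:R.
Proof. by rewrite /Nn -[p.-1]bin1 mul_bin_diag natrM mulrC mulKf ?pnatr_eq0. Qed.

Lemma sum_pairs_lt_1 (R : realType) (p : nat) :
  \sum_(k : 'I_p * 'I_p | (k.1 < k.2)%N) (1 : R) = Nn R p.
Proof. by rewrite Nn_bin2 -card_pairs_lt natr_sum. Qed.

Section ProductLaw.

Variables (R : realType) (p : nat) (al be : R).
Hypotheses (al_ge0 : 0 <= al) (be_ge0 : 0 <= be) (al_be_le1 : al + be <= 1).

Local Notation sw := (site_weight R p al be).
Local Notation Prob := (Prob R p al be).

Definition site_expect (k : 'I_p * 'I_p) (f : 'I_3 -> 'I_3 -> R) : R :=
  \sum_(a : 'I_3) \sum_(b : 'I_3) sw k a * sw k b * f a b.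

Definition expect (X : Omega p -> R) : R :=
  \sum_(w : Omega p) weight R p al be w * X w.

Lemma site_weight_ge0 k a : 0 <= sw k a.
Proof.
rewrite /site_weight /eps_pmf; case: (k.1 < k.2)%N; last exact: ler0n.
by case: ifP => _; [rewrite -addrA -opprD subr_ge0 | case: ifP].
Qed.

Lemma weight_ge0 w : 0 <= weight R p al be w.
Proof. by apply: prodr_ge0 => k _; rewrite mulr_ge0 ?site_weight_ge0. Qed.

Lemma site_expect_cst k c : site_expect k (fun _ _ => c) = c.
Proof.
rewrite /site_expect !big_ord_recl !big_ord0 /site_weight.
by case: (k.1 < k.2)%N; rewrite /eps_pmf /=; ring.
Qed.

Lemma site_expect_le k (f h : 'I_3 -> 'I_3 -> R) :
  (forall a b, f a b <= h a b) -> site_expect k f <= site_expect k h.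
Proof.
move=> le_fh; apply: ler_sum => a _; apply: ler_sum => b _.
by rewrite ler_wpM2l ?mulr_ge0 ?site_weight_ge0.
Qed.

Lemma expect_sum (I : finType) (X : I -> Omega p -> R) :
  expect (fun w => \sum_i X i w) = \sum_i expect (X i).
Proof. by rewrite /expect exchange_big; apply: eq_bigr => w _; rewrite big_distrr. Qed.

Lemma expectZ c (X : Omega p -> R) : expect (fun w => c * X w) = c * expect X.
Proof. by rewrite /expect big_distrr; apply: eq_bigr => w _; rewrite mulrCA. Qed.

Lemma expect_prod (phi : 'I_p * 'I_p -> 'I_3 -> 'I_3 -> R) :
  expect (fun w => \prod_k phi k (w.1 k) (w.2 k)) = \prod_k site_expect k (phi k).
Proof.
rewrite /expect /weight; under [LHS]eq_bigr do rewrite -big_split /=.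
rewrite -(pair_bigA _ (fun w1 w2 : {ffun _ -> 'I_3} =>
  \prod_k (sw k (w1 k) * sw k (w2 k) * phi k (w1 k) (w2 k)))) /=.
under eq_bigr => w1 _ do rewrite -(bigA_distr_bigA (fun k b =>
  sw k (w1 k) * sw k b * phi k (w1 k) b)).
by rewrite -(bigA_distr_bigA (fun k a => \sum_b sw k a * sw k b * phi k a b)).
Qed.

Lemma expect_site k f : expect (fun w => f (w.1 k) (w.2 k)) = site_expect k f.
Proof.
have := expect_prod (fun m => if m == k then f else fun _ _ => 1).
rewrite (bigD1 k) //= eqxx big1 ?mulr1 => [<-|m /negbTE->]; last exact: site_expect_cst.
by apply: eq_bigr => w _; rewrite (bigD1 k) //= eqxx big1 ?mulr1 // => m /negbTE->.
Qed.

Lemma expect_site2 k l f h : k != l ->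
  expect (fun w => f (w.1 k) (w.2 k) * h (w.1 l) (w.2 l)) =
  site_expect k f * site_expect l h.
Proof.
move=> neq_kl; pose phi m := if m == k then f else if m == l then h else fun _ _ => 1.
have phi_k : phi k = f by rewrite /phi eqxx.
have phi_l : phi l = h by rewrite /phi eq_sym (negbTE neq_kl) eqxx.
have phi_out m : m != k -> m != l -> phi m = fun _ _ => 1.
  by rewrite /phi => /negbTE-> /negbTE->.
have prod_kl (F : 'I_p * 'I_p -> R) :
    (forall m, m != k -> m != l -> F m = 1) -> \prod_m F m = F k * F l.
  move=> F_out; rewrite (bigD1 k) //= (bigD1 l) 1?eq_sym //= big1 ?mulr1 //.
  by move=> m /andP[? ?]; apply: F_out.
have := expect_prod phi.
rewrite prod_kl => [|m ? ?]; last by rewrite phi_out ?site_expect_cst.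
rewrite phi_k phi_l => <-; apply: eq_bigr => w _.
rewrite (prod_kl (fun m => phi m (w.1 m) (w.2 m))) ?phi_k ?phi_l // => m ? ?.
by rewrite phi_out.
Qed.

Lemma expect_sqr_centered_sum (g : 'I_p * 'I_p -> 'I_3 -> 'I_3 -> R) :
  (forall k, site_expect k (g k) = 0) ->
  expect (fun w => (\sum_k g k (w.1 k) (w.2 k)) ^+ 2) =
  \sum_k site_expect k (fun a b => g k a b ^+ 2).
Proof.
move=> g_centered.
transitivity (expect (fun w =>
    \sum_k \sum_l g k (w.1 k) (w.2 k) * g l (w.1 l) (w.2 l))).
  by apply: eq_bigr => w _; rewrite expr2 big_distrlr.
rewrite expect_sum; apply: eq_bigr => k _.
rewrite expect_sum (bigD1 k) //= big1 ?addr0 => [|l neq_lk].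
  by rewrite -expect_site; apply: eq_bigr => w _; rewrite expr2.
by rewrite expect_site2 1?eq_sym // g_centered mul0r.
Qed.

Lemma expect_sqr_centered_sum_le (g : 'I_p * 'I_p -> 'I_3 -> 'I_3 -> R) :
  (forall k, site_expect k (g k) = 0) ->
  (forall k a b, g k a b ^+ 2 <= if (k.1 < k.2)%N then 1 else 0) ->
  expect (fun w => (\sum_k g k (w.1 k) (w.2 k)) ^+ 2) <= Nn R p.
Proof.
move=> g_centered g_sq_le; rewrite expect_sqr_centered_sum // -sum_pairs_lt_1.
rewrite (big_mkcond (fun k => _ < _)%N).
apply: ler_sum => k _; rewrite -[leRHS](site_expect_cst k).
exact: site_expect_le.
Qed.

Lemma chebyshev_Prob (X : Omega p -> R) e : 0 < e ->
  Prob (fun w => e < `|X w|) <= expect (fun w => X w ^+ 2) / e ^+ 2.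
Proof.
move=> e_gt0; rewrite /Prob /expect mulr_suml big_mkcond /=; apply: ler_sum => w _.
rewrite -mulrA; have w_ge0 := weight_ge0 w.
case: ifP => [lt_e_X|_]; last by rewrite mulr_ge0 // divr_ge0 ?sqr_ge0.
rewrite ler_peMr // ler_pdivlMr ?exprn_gt0 // mul1r -(real_normK (num_real (X w))).
by have := normr_ge0 (X w); nra.
Qed.

Lemma Prob_le_union (E E1 E2 : pred (Omega p)) :
  (forall w, E w -> E1 w || E2 w) -> Prob E <= Prob E1 + Prob E2.
Proof.
move=> sub_E; rewrite /Prob (big_mkcond E) (big_mkcond E1) (big_mkcond E2) -big_split.
apply: ler_sum => w _; have := weight_ge0 w.
by case: (E w) (sub_E w) => [/(_ isT)|_]; case: (E1 w); case: (E2 w) => //= *; lra.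
Qed.

Lemma Prob_centered_sum_gt_le (g : 'I_p * 'I_p -> 'I_3 -> 'I_3 -> R) (X : Omega p -> R) (c K : R) :
  0 < Nn R p -> 0 < K -> c ^+ 2 * Nn R p ^+ 2 <= 1 ->
  (forall k, site_expect k (g k) = 0) ->
  (forall k a b, g k a b ^+ 2 <= if (k.1 < k.2)%N then 1 else 0) ->
  (forall w, X w = c * \sum_k g k (w.1 k) (w.2 k)) ->
  Prob (fun w => K / Num.sqrt (Nn R p) < `|X w|) <= K ^-2.
Proof.
move=> N_gt0 K_gt0 cN_le1 g_centered g_sq_le X_def.
have sqrtN_gt0 : 0 < Num.sqrt (Nn R p) by rewrite sqrtr_gt0.
apply: le_trans (chebyshev_Prob X (divr_gt0 K_gt0 sqrtN_gt0)) _.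
have EX2_le : expect (fun w => X w ^+ 2) <= c ^+ 2 * Nn R p.
  rewrite (_ : expect _ = c ^+ 2 * expect (fun w => (\sum_k g k (w.1 k) (w.2 k)) ^+ 2)).
    by rewrite ler_wpM2l ?sqr_ge0 ?expect_sqr_centered_sum_le.
  by rewrite -expectZ; apply: eq_bigr => w _; rewrite X_def exprMn.
rewrite expr_div_n sqr_sqrtr ?(ltW N_gt0) // invf_div mulrA ler_pdivrMr ?exprn_gt0 //.
by rewrite mulVf ?gt_eqF ?exprn_gt0 //; nra.
Qed.

End ProductLaw.

(* At dl = A_ij in {0, 1} these are the means of Y_ij and of |Y*_ij - Y_ij| / 2;
   being affine in dl, at dl = delta they are the means of u1hat and u2hat. *)
Definition mean_u1 (R : realType) (al be dl : R) : R := al + dl * (1 - al - be).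
Definition mean_u2 (R : realType) (al be dl : R) : R :=
  dl * (be * (1 - be)) + (1 - dl) * (al * (1 - al)).

Lemma mean_u1_ge0_le1 (R : realType) (al be dl : R) :
  0 <= al -> 0 <= be -> al + be <= 1 -> 0 <= dl <= 1 -> 0 <= mean_u1 al be dl <= 1.
Proof. by rewrite /mean_u1 => *; apply/andP; split; nra. Qed.

Lemma mean_u2_ge0_le1 (R : realType) (al be dl : R) :
  0 <= al -> 0 <= be -> al + be <= 1 -> 0 <= dl <= 1 -> 0 <= 2 * mean_u2 al be dl <= 1.
Proof.
move=> al_ge0 be_ge0 al_be_le1 /andP[dl_ge0 dl_le1].
have var_bd (x : R) : 0 <= x <= 1 -> 0 <= x * (1 - x) <= 1 / 4.
  by move=> /andP[? ?]; have ? := sqr_ge0 (x - 1 / 2); apply/andP; split; nra.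
have /andP[? ?] : 0 <= al * (1 - al) <= 1 / 4 by apply: var_bd; apply/andP; split; lra.
have /andP[? ?] : 0 <= be * (1 - be) <= 1 / 4 by apply: var_bd; apply/andP; split; lra.
by rewrite /mean_u2; apply/andP; split; nra.
Qed.

Lemma natr_bool_ge0_le1 (R : realType) (b : bool) : 0 <= ((b : nat)%:R : R) <= 1.
Proof. by case: b; rewrite /= ?lexx ?ler01. Qed.

Lemma Yval_ge0_le1 (R : realType) (a : bool) (e : 'I_3) : 0 <= Yval R a e <= 1.
Proof.
rewrite /Yval; case: ifP => _; first by rewrite ler01 lexx.
by case: ifP => _; rewrite ?natr_bool_ge0_le1 // lexx ler01.
Qed.

Lemma sqr_subr_le1 (R : realDomainType) (x y : R) :
  0 <= x <= 1 -> 0 <= y <= 1 -> (x - y) ^+ 2 <= 1.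
Proof. by move=> /andP[? ?] /andP[? ?]; nra. Qed.

Section SiteDeviations.

Variables (R : realType) (p : nat) (Ap : 'I_p -> 'I_p -> bool) (al be : R).
Hypotheses (al_ge0 : 0 <= al) (be_ge0 : 0 <= be) (al_be_le1 : al + be <= 1).

Local Notation Ak k := (Ap k.1 k.2 : nat)%:R.

Definition dev_Y (k : 'I_p * 'I_p) (a _ : 'I_3) : R :=
  if (k.1 < k.2)%N then Yval R (Ap k.1 k.2) a - mean_u1 al be (Ak k) else 0.

Definition dev_absdiff (k : 'I_p * 'I_p) (a b : 'I_3) : R :=
  if (k.1 < k.2)%N then
    `|Yval R (Ap k.1 k.2) b - Yval R (Ap k.1 k.2) a| - 2 * mean_u2 al be (Ak k)
  else 0.

Lemma site_expect_dev_Y k : site_expect al be k (dev_Y k) = 0.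
Proof.
rewrite /dev_Y; case lt_k: (k.1 < k.2)%N; last exact: site_expect_cst.
rewrite /site_expect !big_ord_recl !big_ord0 /site_weight lt_k /eps_pmf /Yval /mean_u1 /=.
by case: (Ap _ _) => /=; ring.
Qed.

Lemma site_expect_dev_absdiff k : site_expect al be k (dev_absdiff k) = 0.
Proof.
rewrite /dev_absdiff; case lt_k: (k.1 < k.2)%N; last exact: site_expect_cst.
rewrite /site_expect !big_ord_recl !big_ord0 /site_weight lt_k /eps_pmf /Yval /mean_u2 /=.
by case: (Ap _ _) => /=; rewrite ?subrr ?normr0 ?subr0 ?sub0r ?normrN ?normr1; ring.
Qed.

Lemma dev_Y_sqr_le k a b : dev_Y k a b ^+ 2 <= if (k.1 < k.2)%N then 1 else 0.
Proof.
rewrite /dev_Y; case: ifP => _; last by rewrite expr0n.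
by rewrite sqr_subr_le1 ?Yval_ge0_le1 ?mean_u1_ge0_le1 ?natr_bool_ge0_le1.
Qed.

Lemma dev_absdiff_sqr_le k a b : dev_absdiff k a b ^+ 2 <= if (k.1 < k.2)%N then 1 else 0.
Proof.
rewrite /dev_absdiff; case: ifP => _; last by rewrite expr0n.
apply: sqr_subr_le1; last by rewrite mean_u2_ge0_le1 ?natr_bool_ge0_le1.
have /andP[? ?] := Yval_ge0_le1 R (Ap k.1 k.2) a.
have /andP[? ?] := Yval_ge0_le1 R (Ap k.1 k.2) b.
by rewrite normr_ge0 ler_norml; apply/andP; split; lra.
Qed.

End SiteDeviations.

Lemma sum_pairs_cst (R : realType) (p : nat) (x : R) :
  \sum_(k : 'I_p * 'I_p | (k.1 < k.2)%N) x = Nn R p * x.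
Proof. by rewrite -sum_pairs_lt_1 mulr_suml; under [RHS]eq_bigr do rewrite mul1r. Qed.

Section EmpiricalMoments.

Variables (R : realType) (A : forall p : nat, 'I_p -> 'I_p -> bool) (p : nat) (al be : R).
Hypotheses (al_ge0 : 0 <= al) (be_ge0 : 0 <= be) (al_be_le1 : al + be <= 1).
Arguments A : clear implicits.

Lemma sum_pairs_A : 0 < Nn R p ->
  \sum_(k : 'I_p * 'I_p | (k.1 < k.2)%N) (A p k.1 k.2 : nat)%:R = Nn R p * delta R A p.
Proof. by move=> N_gt0; rewrite /delta -invf_div -/(Nn R p) mulVKf ?gt_eqF. Qed.

Lemma u1hat_centered (w : Omega p) : 0 < Nn R p ->
  u1hat R A p w - mean_u1 al be (delta R A p) =
  (Nn R p)^-1 * \sum_k dev_Y (A p) al be k (w.1 k) (w.2 k).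
Proof.
move=> N_gt0; rewrite /dev_Y -big_mkcond /= sumrB /mean_u1 big_split /= -big_distrl /=.
rewrite sum_pairs_A // sum_pairs_cst /u1hat -invf_div -/(Nn R p).
by field; rewrite gt_eqF.
Qed.

Lemma u2hat_centered (w : Omega p) : 0 < Nn R p ->
  u2hat R A p w - mean_u2 al be (delta R A p) =
  (2 * Nn R p)^-1 * \sum_k dev_absdiff (A p) al be k (w.1 k) (w.2 k).
Proof.
move=> N_gt0; rewrite /dev_absdiff -big_mkcond /= sumrB -big_distrr /= /mean_u2.
rewrite big_split /= -!big_distrl /= sumrB sum_pairs_A // sum_pairs_cst /u2hat.
rewrite (_ : (p * p.-1)%N%:R = 2 * Nn R p); last by rewrite /Nn mulrC divfK ?pnatr_eq0.
by field; rewrite gt_eqF.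
Qed.

Lemma Prob_u1hat_dev_gt_le (K : R) : 0 < Nn R p -> 0 < K ->
  Prob R p al be
    (fun w => K / Num.sqrt (Nn R p) < `|u1hat R A p w - mean_u1 al be (delta R A p)|)
  <= K ^-2.
Proof.
move=> N_gt0 K_gt0; apply: (Prob_centered_sum_gt_le al_ge0 be_ge0 al_be_le1
  (g := dev_Y (A p) al be) (c := (Nn R p)^-1)) => //.
- by rewrite -exprMn mulVf ?gt_eqF ?expr1n.
- exact: site_expect_dev_Y.
- exact: dev_Y_sqr_le.
- by move=> w; rewrite u1hat_centered.
Qed.

Lemma Prob_u2hat_dev_gt_le (K : R) : 0 < Nn R p -> 0 < K ->
  Prob R p al be
    (fun w => K / Num.sqrt (Nn R p) < `|u2hat R A p w - mean_u2 al be (delta R A p)|)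
  <= K ^-2.
Proof.
move=> N_gt0 K_gt0; apply: (Prob_centered_sum_gt_le al_ge0 be_ge0 al_be_le1
  (g := dev_absdiff (A p) al be) (c := (2 * Nn R p)^-1)) => //.
- by rewrite -exprMn invfM -mulrA mulVf ?gt_eqF // mulr1 expr2; lra.
- exact: site_expect_dev_absdiff.
- exact: dev_absdiff_sqr_le.
- by move=> w; rewrite u2hat_centered.
Qed.

End EmpiricalMoments.

Lemma normr_div_subr_le (R : realFieldType) (n d x c C e : R) :
  0 < c -> c / 2 <= `|d| -> `|n - x * d| <= C / 2 * e -> `|n / d - x| <= C / c * e.
Proof.
move=> c_gt0 d_ge n_le.
have d_gt0 : 0 < `|d| by apply: lt_le_trans d_ge; rewrite divr_gt0.
have Ce_ge0 : 0 <= C / 2 * e := le_trans (normr_ge0 _) n_le.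
have -> : n / d - x = (n - x * d) / d by field; rewrite -normr_gt0.
rewrite normrM normfV ler_pdivrMr // (le_trans n_le) //.
rewrite (_ : C / c * e * `|d| = C / 2 * e * (2 * `|d| / c)); last by field; rewrite gt_eqF.
by rewrite ler_peMr // ler_pdivlMr // mul1r; lra.
Qed.

Lemma beta_hat_perturb (R : realType) (al be dl c : R) :
  0 <= al -> 0 <= be -> al + be <= 1 -> 0 <= dl <= 1 ->
  0 < c -> c <= dl * (1 - al - be) ^+ 2 ->
  forall D1 D2 e : R, e <= c / 4 -> `|D1| <= e -> `|D2| <= e ->
  `|beta_hat R al (mean_u1 al be dl + D1) (mean_u2 al be dl + D2) - be| <= 20 / c * e.
Proof.
move=> al_ge0 be_ge0 al_be_le1 /andP[dl_ge0 dl_le1] c_gt0 c_le D1 D2 e e_le.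
move=> /ler_normlP[? ?] /ler_normlP[? ?].
rewrite /beta_hat; apply: normr_div_subr_le => //.
  rewrite (_ : _ - al = dl * (1 - al - be) + D1); last by rewrite /mean_u1; ring.
  rewrite ler_normr; apply/orP; left; nra.
rewrite (_ : _ - be * _ = D2 + (al - be) * D1); last by rewrite /mean_u1 /mean_u2; ring.
by apply/ler_normlP; split; nra.
Qed.

Lemma delta_hat_alpha_perturb (R : realType) (al be dl c : R) :
  0 <= al -> 0 <= be -> al + be <= 1 -> 0 <= dl <= 1 ->
  0 < c -> c <= dl * (1 - al - be) ^+ 2 ->
  forall D1 D2 e : R, e <= c / 4 -> `|D1| <= e -> `|D2| <= e ->
  `|delta_hat_alpha R al (mean_u1 al be dl + D1) (mean_u2 al be dl + D2) - dl|
  <= 20 / c * e.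
Proof.
move=> al_ge0 be_ge0 al_be_le1 /andP[dl_ge0 dl_le1] c_gt0 c_le D1 D2 e e_le.
move=> /ler_normlP[? ?] /ler_normlP[? ?].
have /andP[s_ge0 s_le1] : 0 <= 1 - al - be <= 1 by apply/andP; split; lra.
have s2_ge0 := sqr_ge0 (1 - al - be).
have s2_le1 : (1 - al - be) ^+ 2 <= 1 by rewrite exprn_ile1.
have c_le1 : c <= 1 by nra.
have /andP[e_ge0 e_le1] : 0 <= e <= 1 by apply/andP; split; lra.
rewrite /delta_hat_alpha; apply: normr_div_subr_le => //.
  rewrite (_ : _ + al ^+ 2 = dl * (1 - al - be) ^+ 2 + (1 - 2 * al) * D1 - D2); last first.
    by rewrite /mean_u1 /mean_u2; ring.
  rewrite ler_normr; apply/orP; left; nra.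
rewrite (_ : _ - dl * _ =
    (2 * dl * (1 - al - be) - dl * (1 - 2 * al)) * D1 + D1 ^+ 2 + dl * D2); last first.
  by rewrite /mean_u1 /mean_u2; ring.
have /andP[q_ge q_le] : -3 <= 2 * dl * (1 - al - be) - dl * (1 - 2 * al) <= 3.
  by apply/andP; split; nra.
set q := 2 * dl * _ - _ in q_ge q_le *.
by apply/ler_normlP; split; nra.
Qed.

Lemma alpha_hat_perturb (R : realType) (al be dl c : R) :
  0 <= al -> 0 <= be -> al + be <= 1 -> 0 <= dl <= 1 ->
  0 < c -> c <= (1 - dl) * (1 - al - be) ^+ 2 ->
  forall D1 D2 e : R, e <= c / 4 -> `|D1| <= e -> `|D2| <= e ->
  `|alpha_hat R be (mean_u1 al be dl + D1) (mean_u2 al be dl + D2) - al| <= 20 / c * e.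
Proof.
move=> al_ge0 be_ge0 al_be_le1 /andP[dl_ge0 dl_le1] c_gt0 c_le D1 D2 e e_le.
move=> /ler_normlP[? ?] /ler_normlP[? ?].
rewrite /alpha_hat; apply: normr_div_subr_le => //.
  rewrite (_ : _ + be - 1 = - ((1 - dl) * (1 - al - be)) + D1); last by rewrite /mean_u1; ring.
  rewrite ler_normr; apply/orP; right; nra.
rewrite (_ : _ - al * _ = (be - al) * D1 - D2); last by rewrite /mean_u1 /mean_u2; ring.
by apply/ler_normlP; split; nra.
Qed.

Lemma delta_hat_beta_perturb (R : realType) (al be dl c : R) :
  0 <= al -> 0 <= be -> al + be <= 1 -> 0 <= dl <= 1 ->
  0 < c -> c <= (1 - dl) * (1 - al - be) ^+ 2 ->
  forall D1 D2 e : R, e <= c / 4 -> `|D1| <= e -> `|D2| <= e ->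
  `|delta_hat_beta R be (mean_u1 al be dl + D1) (mean_u2 al be dl + D2) - dl|
  <= 20 / c * e.
Proof.
move=> al_ge0 be_ge0 al_be_le1 /andP[dl_ge0 dl_le1] c_gt0 c_le D1 D2 e e_le.
move=> /ler_normlP[? ?] /ler_normlP[? ?].
have /andP[s_ge0 s_le1] : 0 <= 1 - al - be <= 1 by apply/andP; split; lra.
have s2_ge0 := sqr_ge0 (1 - al - be).
have s2_le1 : (1 - al - be) ^+ 2 <= 1 by rewrite exprn_ile1.
have c_le1 : c <= 1 by nra.
have /andP[e_ge0 e_le1] : 0 <= e <= 1 by apply/andP; split; lra.
have /andP[? ?] : 0 <= mean_u1 al be dl <= 1 by rewrite mean_u1_ge0_le1 ?dl_ge0.
rewrite /delta_hat_beta; apply: normr_div_subr_le => //.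
  rewrite (_ : _ - (1 - be) ^+ 2 =
      - ((1 - dl) * (1 - al - be) ^+ 2) + (1 - 2 * be) * D1 + D2); last first.
    by rewrite /mean_u1 /mean_u2; ring.
  rewrite ler_normr; apply/orP; right; nra.
rewrite (_ : _ - dl * _ =
    (2 * mean_u1 al be dl - 1 - dl * (1 - 2 * be)) * D1 + D1 ^+ 2 + (1 - dl) * D2); last first.
  by rewrite /mean_u1 /mean_u2; ring.
have /andP[q_ge q_le] : -3 <= 2 * mean_u1 al be dl - 1 - dl * (1 - 2 * be) <= 3.
  by apply/andP; split; nra.
set q := 2 * mean_u1 al be dl - _ - _ in q_ge q_le *.
by apply/ler_normlP; split; nra.
Qed.

Lemma delta_ge0_le1 (R : realType) (A : forall p : nat, 'I_p -> 'I_p -> bool) (p : nat) :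
  0 <= delta R A p <= 1.
Proof.
have [pp1_eq0 | pp1_neq0] := eqVneq ((p * p.-1)%N%:R : R) 0.
  by rewrite /delta pp1_eq0 invr0 mulr0 mul0r lexx ler01.
have N_gt0 : 0 < Nn R p by rewrite divr_gt0 // lt_def pp1_neq0 ler0n.
have S_ge0 : 0 <= \sum_(k : 'I_p * 'I_p | (k.1 < k.2)%N) (A p k.1 k.2 : nat)%:R :> R.
  by apply: sumr_ge0 => k _; rewrite ler0n.
have S_le : \sum_(k : 'I_p * 'I_p | (k.1 < k.2)%N) (A p k.1 k.2 : nat)%:R <= Nn R p.
  rewrite -sum_pairs_lt_1; apply: ler_sum => k _.
  by case/andP: (natr_bool_ge0_le1 R (A p k.1 k.2)).
rewrite sum_pairs_A // in S_ge0 S_le.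
by rewrite -(pmulr_rge0 _ N_gt0) S_ge0 -(ler_pM2l N_gt0) mulr1 S_le.
Qed.

Lemma Nn_to_infty (R : realType) (A : forall p : nat, 'I_p -> 'I_p -> bool) :
  tends_to_infty R (fun p => (p * p.-1)%N%:R * delta R A p) -> tends_to_infty R (Nn R).
Proof.
move=> N1_infty M; have [P0 hP0] := N1_infty (2 * M); exists P0 => p /hP0.
have /andP[_ dl_le1] := delta_ge0_le1 R A p.
rewrite /Nn; move: (ler0n R (p * p.-1)); move: (_%:R) => x; nra.
Qed.

Lemma eventually_inv_sqrt_le (R : realType) (f : nat -> R) (K e : R) :
  tends_to_infty R f -> 0 < e ->
  exists P0 : nat, forall p, (P0 <= p)%N -> 0 < f p /\ K / Num.sqrt (f p) <= e.
Proof.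
move=> f_infty e_gt0; have [P0 hP0] := f_infty ((K / e) ^+ 2).
exists P0 => p /hP0 lt_f; have f_gt0 : 0 < f p := le_lt_trans (sqr_ge0 _) lt_f.
split=> //; rewrite ler_pdivrMr ?sqrtr_gt0 // -ler_pdivrMl //.
by apply: (le_trans (ler_norm _)); apply: ltW; rewrite -sqrtr_sqr ltr_sqrt // mulrC.
Qed.

Lemma OpN_of_stable_estimator (R : realType) (A : forall p : nat, 'I_p -> 'I_p -> bool)
    (alpha beta : nat -> R) (F : nat -> R -> R -> R) (c C : R) (P0 : nat) :
  (forall p, 0 <= alpha p) -> (forall p, 0 <= beta p) -> (forall p, alpha p + beta p <= 1) ->
  tends_to_infty R (Nn R) -> 0 < c -> 0 < C ->
  (forall p, (P0 <= p)%N -> forall D1 D2 e : R, e <= c / 4 -> `|D1| <= e -> `|D2| <= e ->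
     `|F p (mean_u1 (alpha p) (beta p) (delta R A p) + D1)
           (mean_u2 (alpha p) (beta p) (delta R A p) + D2)| <= C * e) ->
  OpN R alpha beta (fun p w => F p (u1hat R A p w) (u2hat R A p w)).
Proof.
move=> al_ge0 be_ge0 al_be_le1 N_infty c_gt0 C_gt0 F_stable eta eta_gt0.
(* K^-2 + K^-2 = eta bounds the two Chebyshev tails together. *)
pose K := Num.sqrt (2 / eta).
have K_gt0 : 0 < K by rewrite sqrtr_gt0 divr_gt0.
have [P1 hP1] := eventually_inv_sqrt_le K N_infty (divr_gt0 c_gt0 (ltr0n _ 4)).
exists (C * K); split; first exact: mulr_gt0.
exists (maxn P0 P1) => p; rewrite geq_max => /andP[/F_stable F_p /hP1[N_gt0 e_le]].
set e := K / _ in e_le; rewrite -mulrA -/e.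
set m1 := mean_u1 _ _ _ in F_p; set m2 := mean_u2 _ _ _ in F_p.
apply: le_trans (Prob_le_union (al_ge0 p) (be_ge0 p) (al_be_le1 p)
    (E1 := fun w => e < `|u1hat R A p w - m1|) (E2 := fun w => e < `|u2hat R A p w - m2|) _) _.
  move=> w; apply: contraLR; rewrite negb_or -!leNgt => /andP[D1_le D2_le].
  by have := F_p _ _ _ e_le D1_le D2_le; rewrite !subrKC.
apply: le_trans (lerD (Prob_u1hat_dev_gt_le A (al_ge0 p) (be_ge0 p) (al_be_le1 p) N_gt0 K_gt0)
  (Prob_u2hat_dev_gt_le A (al_ge0 p) (be_ge0 p) (al_be_le1 p) N_gt0 K_gt0)) _.
by rewrite /K sqr_sqrtr ?invf_div ?(ltW (divr_gt0 _ eta_gt0)) //; lra.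
Qed.

Theorem proposition1 (R : realType) (A : forall p : nat, 'I_p -> 'I_p -> bool)
  (alpha beta : nat -> R)
  (Asym : forall (p : nat) (i j : 'I_p), A p i j = A p j i)
  (Adiag : forall (p : nat) (i : 'I_p), A p i i = false)
  (alpha_ge0 : forall p : nat, 0 <= alpha p)
  (beta_ge0 : forall p : nat, 0 <= beta p)
  (alpha_beta_le1 : forall p : nat, alpha p + beta p <= 1)
  (HN1 : tends_to_infty R (fun p : nat => (p * p.-1)%N%:R * delta R A p))
  (HN2 : tends_to_infty R (fun p : nat => (p * p.-1)%N%:R * (1 - delta R A p))) :
  ((exists c : R, 0 < c /\ exists P0 : nat, forall p : nat, (P0 <= p)%N ->
        c <= delta R A p * (1 - alpha p - beta p) ^+ 2) ->
     OpN R alpha beta (fun p w =>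
       beta_hat R (alpha p) (u1hat R A p w) (u2hat R A p w) - beta p) /\
     OpN R alpha beta (fun p w =>
       delta_hat_alpha R (alpha p) (u1hat R A p w) (u2hat R A p w) - delta R A p))
  /\
  ((exists c : R, 0 < c /\ exists P0 : nat, forall p : nat, (P0 <= p)%N ->
        c <= (1 - delta R A p) * (1 - alpha p - beta p) ^+ 2) ->
     OpN R alpha beta (fun p w =>
       alpha_hat R (beta p) (u1hat R A p w) (u2hat R A p w) - alpha p) /\
     OpN R alpha beta (fun p w =>
       delta_hat_beta R (beta p) (u1hat R A p w) (u2hat R A p w) - delta R A p)).
Proof.
(* Only entries i < j enter, so Asym and Adiag are not needed; nor is HN2, since
   p(p-1)δ <= 2N already forces N -> oo. *)
have N_infty := Nn_to_infty HN1.
split=> -[c [c_gt0 [P0 c_le]]]; have C_gt0 : 0 < 20 / c by rewrite divr_gt0.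
all: have stable F := OpN_of_stable_estimator (A := A) (F := F) (P0 := P0)
       alpha_ge0 beta_ge0 alpha_beta_le1 N_infty c_gt0 C_gt0.
- split.
  + apply: (stable (fun p u1 u2 => beta_hat R (alpha p) u1 u2 - beta p)) => p /c_le.
    exact: beta_hat_perturb (alpha_ge0 p) (beta_ge0 p) (alpha_beta_le1 p)
      (delta_ge0_le1 R A p) c_gt0.
  + apply: (stable (fun p u1 u2 => delta_hat_alpha R (alpha p) u1 u2 - delta R A p)) => p /c_le.
    exact: delta_hat_alpha_perturb (alpha_ge0 p) (beta_ge0 p) (alpha_beta_le1 p)
      (delta_ge0_le1 R A p) c_gt0.
- split.
  + apply: (stable (fun p u1 u2 => alpha_hat R (beta p) u1 u2 - alpha p)) => p /c_le.
    exact: alpha_hat_perturb (alpha_ge0 p) (beta_ge0 p) (alpha_beta_le1 p)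
      (delta_ge0_le1 R A p) c_gt0.
  + apply: (stable (fun p u1 u2 => delta_hat_beta R (beta p) u1 u2 - delta R A p)) => p /c_le.
    exact: delta_hat_beta_perturb (alpha_ge0 p) (beta_ge0 p) (alpha_beta_le1 p)
      (delta_ge0_le1 R A p) c_gt0.
Qed.
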